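(* Let $\kappa>0$ and consider one of the following reference solutions $t\mapsto e^{i\omega t}U_*$ of the system (H): (i) $\tau=-1$: $U_*=\frac{1}{\sqrt2}(1,-1)$, $\omega=\frac\kappa2-2$ (any $\kappa>0$); (ii) $\tau=+1$ and $0<\kappa<2$: $U_*=\frac{1}{\sqrt2}(1,1)$, $\omega=\frac\kappa2$; (iii) $\kappa>2$ and $\tau\in\{+1,-1\}$: $U_*=(\alpha_\tau,\beta_\tau)$, $\omega=\kappa-1$. Then in each case the reference solution is spectrally stable and orbitally stable.
   Context: Let $\kappa>0$. System (H) is the ODE system for $u=(u_0,u_1):\mathbb R\to\mathbb C^2$: $i u_0'=u_0-u_1-\kappa|u_0|^2u_0$, $\; i u_1'=u_1-u_0-\kappa|u_1|^2u_1$. For $\kappa>2$ and $\tau\in\{\pm1\}$ set $\alpha_\tau=\frac{\sqrt{\kappa+2}-\tau\sqrt{\kappa-2}}{2\sqrt\kappa}$, $\beta_\tau=\frac{\sqrt{\kappa+2}+\tau\sqrt{\kappa-2}}{2\sqrt\kappa}$. For real $U_*=(U_{*0},U_{*1})$ with $|U_{*0}|^2+|U_{*1}|^2=1$ and $\omega$ as listed, $t\mapsto e^{i\omega t}U_*$ solves (H). Linearization: writing $u_j=e^{i\omega t}(U_{*j}+v_j)$ and keeping linear terms gives $i v_j'=(1+\omega-\kappa U_{*j}^2)v_j-v_{1-j}-2\kappa U_{*j}^2\,\mathrm{Re}(v_j)$, $j=0,1$; with $v_j=q_j+ip_j$ this is $X'=\mathbb L X$ for $X=(q_0,p_0,q_1,p_1)\in\mathbb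 R^4$ and a real $4\times4$ matrix $\mathbb L$. The reference solution is spectrally stable if every eigenvalue of $\mathbb L$ has nonpositive real part, spectrally unstable otherwise. The reference solution is orbitally stable if for every $\epsilon>0$ there is $\delta>0$ such that every solution $u$ of (H) with $|u(0)-U_*|\le\delta$ satisfies $\inf_{\theta\in\mathbb R}|u(t)-e^{i\theta}U_*|\le\epsilon$ for all $t\ge0$; orbitally unstable otherwise. *)

From Stdlib Require Import Reals.
From Coquelicot Require Import Coquelicot.
Open Scope R_scope.

Definition C2 := (C * C)%type.

Definition solves_H (kappa : R) (u : R -> C2) : Prop :=
  exists du0 du1 : R -> C,
    (forall t, is_derive (K := R_AbsRing) (V := C_R_NormedModule)
                 (fun s => fst (u s)) t (du0 t)) /\
    (forall t, is_derive (K := R_AbsRing) (V := C_R_NormedModule)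
                 (fun s => snd (u s)) t (du1 t)) /\
    (forall t, Ci * du0 t =
       fst (u t) - snd (u t) - RtoC kappa * RtoC (Cmod (fst (u t)) ^ 2) * fst (u t))%C /\
    (forall t, Ci * du1 t =
       snd (u t) - fst (u t) - RtoC kappa * RtoC (Cmod (snd (u t)) ^ 2) * snd (u t))%C.

Definition normC2 (w : C2) : R := sqrt (Cmod (fst w) ^ 2 + Cmod (snd w) ^ 2).
Definition subC2 (w w' : C2) : C2 := ((fst w - fst w')%C, (snd w - snd w')%C).

Definition expi (theta : R) : C := (cos theta, sin theta).
Definition rotC2 (theta : R) (U0 U1 : R) : C2 :=
  ((expi theta * RtoC U0)%C, (expi theta * RtoC U1)%C).

Definition orbit_dist (U0 U1 : R) (w : C2) : Rbar :=
  Glb_Rbar (fun x => exists theta : R, x = normC2 (subC2 w (rotC2 theta U0 U1))).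

Definition orbitally_stable (kappa U0 U1 : R) : Prop :=
  forall eps, 0 < eps -> exists delta, 0 < delta /\
    forall u : R -> C2, solves_H kappa u ->
      normC2 (subC2 (u 0) (RtoC U0, RtoC U1)) <= delta ->
      forall t, 0 <= t -> Rbar_le (orbit_dist U0 U1 (u t)) (Finite eps).

(* X = (q0,p0,q1,p1) encoded as a function nat -> R (indices 0..3);
   v_j = q_j + i p_j.  The linearized equation
     i v_j' = (1+omega-kappa U_j^2) v_j - v_{1-j} - 2 kappa U_j^2 Re(v_j)
   gives v_j' = -i * (RHS). *)
Definition lin_rhs_c (kappa omega U0 U1 : R) (X : nat -> R) (j : nat) : C :=
  let v0 : C := (X 0%nat, X 1%nat) in
  let v1 : C := (X 2%nat, X 3%nat) in
  let Uj := if Nat.eqb j 0 then U0 else U1 in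
  let vj := if Nat.eqb j 0 then v0 else v1 in
  let vo := if Nat.eqb j 0 then v1 else v0 in
  (- Ci * (RtoC (1 + omega - kappa * Uj ^ 2) * vj - vo
           - RtoC (2 * kappa * Uj ^ 2 * Re vj)))%C.

Definition lin_rhs (kappa omega U0 U1 : R) (X : nat -> R) (i : nat) : R :=
  match i with
  | 0%nat => Re (lin_rhs_c kappa omega U0 U1 X 0)
  | 1%nat => Im (lin_rhs_c kappa omega U0 U1 X 0)
  | 2%nat => Re (lin_rhs_c kappa omega U0 U1 X 1)
  | _ => Im (lin_rhs_c kappa omega U0 U1 X 1)
  end.

Definition Lmat (kappa omega U0 U1 : R) (i j : nat) : R :=
  lin_rhs kappa omega U0 U1 (fun k => if Nat.eqb k j then 1 else 0) i.

Definition is_eigenvalue4 (M : nat -> nat -> R) (lambda : C) : Prop :=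
  exists v : nat -> C,
    (exists i, (i < 4)%nat /\ v i <> RtoC 0) /\
    forall i, (i < 4)%nat ->
      (RtoC (M i 0%nat) * v 0%nat + RtoC (M i 1%nat) * v 1%nat
       + RtoC (M i 2%nat) * v 2%nat + RtoC (M i 3%nat) * v 3%nat)%C = (lambda * v i)%C.

Definition spectrally_stable (kappa omega U0 U1 : R) : Prop :=
  forall lambda : C, is_eigenvalue4 (Lmat kappa omega U0 U1) lambda -> Re lambda <= 0.

Definition alpha_tau (kappa tau : R) : R :=
  (sqrt (kappa + 2) - tau * sqrt (kappa - 2)) / (2 * sqrt kappa).
Definition beta_tau (kappa tau : R) : R :=
  (sqrt (kappa + 2) + tau * sqrt (kappa - 2)) / (2 * sqrt kappa).

(* Spectrally: with [A_j = 1 + omega - kappa U_j^2] and [B_j = A_j - 2 kappa U_j^2], the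
   characteristic polynomial of [Lmat] is
   [lambda^4 + (A0 B0 + A1 B1 + 2) lambda^2 + (A0 A1 - 1)(B0 B1 - 1)].  At all three
   states [A0 A1 = 1] and [A0 B0 + A1 B1 + 2 >= 0], so [lambda^2] is real and
   nonpositive.

   Orbitally: the mass [N] and the Hamiltonian are conserved.  The Stokes coordinates
   [X = |u0|^2 - |u1|^2] and [Y = 2 Re (u0 conj u1)] are phase invariant, satisfy
   [X^2 + Y^2 <= N^2], and the two invariants make [E = Y + kappa X^2 / 4] conserved.
   The reference state is a strict minimum (i) or maximum (ii, and (iii) up to the
   mirror [X -> -X]) of [E] on the circle [X^2 + Y^2 = 1], so nearby trajectories keep
   [(N, X, Y)] near its value; in (iii) [X] cannot change sign by the intermediate
   value theorem.  Finally [min_theta |w - e^(i theta) U|^2 = N + 1 - 2 |<w, U>|] with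
   [2 |<w, U>|^2 = N + X Xs + Y Ys], so closeness of [(N, X, Y)] bounds the distance to
   the orbit. *)

From Stdlib Require Import Reals Lra Lia Psatz Classical.
From Coquelicot Require Import Coquelicot.
Open Scope R_scope.

Definition lin_matrix (A0 B0 A1 B1 : R) (i j : nat) : R :=
  match i, j with
  | 0%nat, 1%nat => A0 | 0%nat, 3%nat => -1
  | 1%nat, 0%nat => - B0 | 1%nat, 2%nat => 1
  | 2%nat, 1%nat => -1 | 2%nat, 3%nat => A1
  | 3%nat, 0%nat => 1 | 3%nat, 2%nat => - B1
  | _, _ => 0
  end.

Lemma Lmat_lin_matrix (k w U0 U1 : R) (i j : nat) : (i < 4)%nat -> (j < 4)%nat ->
  Lmat k w U0 U1 i j =
  lin_matrix (1 + w - k * U0 ^ 2) (1 + w - k * U0 ^ 2 - 2 * k * U0 ^ 2)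
             (1 + w - k * U1 ^ 2) (1 + w - k * U1 ^ 2 - 2 * k * U1 ^ 2) i j.
Proof.
intros hi hj.
do 4 (destruct i as [|i]; [do 4 (destruct j as [|j]; [unfold Lmat, lin_rhs, lin_rhs_c; simpl; ring|]); lia|]).
lia.
Qed.

Lemma is_eigenvalue4_ext (M M' : nat -> nat -> R) (lam : C) :
  (forall i j, (i < 4)%nat -> (j < 4)%nat -> M i j = M' i j) ->
  is_eigenvalue4 M lam -> is_eigenvalue4 M' lam.
Proof.
intros hM [v [hv Hv]]. exists v. split; [exact hv|].
intros i hi. rewrite <- !hM by lia. exact (Hv i hi).
Qed.

Lemma Cmult_eq0_l (a b : C) : b <> 0 -> (a * b = 0)%C -> a = 0.
Proof. intros hb e. replace a with (a * b / b)%C by (field; exact hb). rewrite e. field. exact hb. Qed.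

Lemma Cmat2_eigenvalue_char (m11 m12 m21 m22 s x0 x1 : C) :
  (s * x0 = m11 * x0 + m12 * x1)%C -> (s * x1 = m21 * x0 + m22 * x1)%C ->
  x0 <> 0 \/ x1 <> 0 ->
  (s * s - (m11 + m22) * s + (m11 * m22 - m12 * m21) = 0)%C.
Proof.
intros e0 e1 [hx|hx]; apply (Cmult_eq0_l _ _ hx).
- transitivity ((s - m22) * (s * x0 - (m11 * x0 + m12 * x1))
                + m12 * (s * x1 - (m21 * x0 + m22 * x1)))%C; [ring|].
  rewrite e0, e1. ring.
- transitivity ((s - m11) * (s * x1 - (m21 * x0 + m22 * x1))
                + m21 * (s * x0 - (m11 * x0 + m12 * x1)))%C; [ring|].
  rewrite e0, e1. ring.
Qed.

Lemma Re_eq0_of_sq_nonpos (lam : C) (s : R) : s <= 0 -> (lam * lam = RtoC s)%C -> Re lam = 0.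
Proof.
destruct lam as [a b]. intros hs e.
pose proof (f_equal fst e) as e1. pose proof (f_equal snd e) as e2. simpl in e1, e2 |- *.
assert (hab : a * b = 0) by lra.
assert (ha4 : a * a * (a * a) <= (a * b) * (a * b)).
{ replace ((a * b) * (a * b)) with (a * a * (b * b)) by ring.
  apply Rmult_le_compat_l; nra. }
rewrite hab, Rmult_0_l in ha4.
assert (ha : a * a = 0) by (apply Rle_antisym; nra).
now destruct (Rmult_integral _ _ ha).
Qed.

Lemma lin_matrix_eigenvector (A0 B0 A1 B1 : R) (lam : C) :
  is_eigenvalue4 (lin_matrix A0 B0 A1 B1) lam ->
  exists q0 p0 q1 p1 : C, (q0 <> 0 \/ p0 <> 0 \/ q1 <> 0 \/ p1 <> 0) /\
    (lam * q0 = RtoC A0 * p0 - p1)%C /\ (lam * p0 = - RtoC B0 * q0 + q1)%C /\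
    (lam * q1 = - p0 + RtoC A1 * p1)%C /\ (lam * p1 = q0 - RtoC B1 * q1)%C.
Proof.
intros [v [[i [hi hv]] Hv]].
exists (v 0%nat), (v 1%nat), (v 2%nat), (v 3%nat). split.
{ destruct i as [|[|[|[|i]]]]; [now left|now right; left|now right; right; left|now right; right; right|lia]. }
pose proof (Hv 0%nat ltac:(lia)) as E0. pose proof (Hv 1%nat ltac:(lia)) as E1.
pose proof (Hv 2%nat ltac:(lia)) as E2. pose proof (Hv 3%nat ltac:(lia)) as E3.
simpl in E0, E1, E2, E3.
rewrite <- E0, <- E1, <- E2, <- E3, !RtoC_opp. repeat split; ring.
Qed.

(* Eliminating [p0, p1] leaves [lam^2 q = M q] for a 2x2 matrix [M] with trace
   [-(A0 B0 + A1 B1 + 2)] and determinant [(A0 A1 - 1)(B0 B1 - 1) = 0]. *)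
Lemma lin_matrix_eigenvalue_sq (A0 B0 A1 B1 : R) (lam : C) :
  A0 * A1 = 1 -> is_eigenvalue4 (lin_matrix A0 B0 A1 B1) lam ->
  (lam * lam = RtoC 0 \/ lam * lam = RtoC (- (A0 * B0 + A1 * B1 + 2)))%C.
Proof.
intros hA hlam.
destruct (lin_matrix_eigenvector _ _ _ _ _ hlam) as [q0 [p0 [q1 [p1 [hnz [F0 [F1 [F2 F3]]]]]]]].
destruct (classic (q0 = 0 /\ q1 = 0)) as [[hq0 hq1]|hq].
- left. rewrite hq0, hq1 in F1, F3.
  assert (hl : lam = 0).
  { destruct hnz as [h|[h|[h|h]]]; try contradiction; apply (Cmult_eq0_l _ _ h).
    - rewrite F1. ring.
    - rewrite F3. ring. }
  rewrite hl. ring.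
- set (s := (lam * lam)%C).
  assert (G0 : (s * q0 = - (RtoC A0 * RtoC B0 + 1) * q0 + (RtoC A0 + RtoC B1) * q1)%C).
  { transitivity (lam * (lam * q0))%C; [unfold s; ring|rewrite F0].
    transitivity (RtoC A0 * (lam * p0) - lam * p1)%C; [ring|rewrite F1, F3; ring]. }
  assert (G1 : (s * q1 = (RtoC B0 + RtoC A1) * q0 + (- (1 + RtoC A1 * RtoC B1)) * q1)%C).
  { transitivity (lam * (lam * q1))%C; [unfold s; ring|rewrite F2].
    transitivity (- (lam * p0) + RtoC A1 * (lam * p1))%C; [ring|rewrite F1, F3; ring]. }
  pose proof (Cmat2_eigenvalue_char _ _ _ _ _ _ _ G0 G1 ltac:(tauto)) as hchi.
  assert (hA' : (RtoC A0 * RtoC A1 - 1 = 0)%C) by (rewrite <- RtoC_mult, hA; ring).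
  assert (hfac : ((s - RtoC (- (A0 * B0 + A1 * B1 + 2))) * s = 0)%C).
  { rewrite <- hchi. rewrite !RtoC_opp, !RtoC_plus, !RtoC_mult.
    transitivity ((s * s - (- (RtoC A0 * RtoC B0 + 1) + - (1 + RtoC A1 * RtoC B1)) * s
        + (- (RtoC A0 * RtoC B0 + 1) * - (1 + RtoC A1 * RtoC B1)
           - (RtoC A0 + RtoC B1) * (RtoC B0 + RtoC A1)))
        - (RtoC A0 * RtoC A1 - 1) * (RtoC B0 * RtoC B1 - 1))%C; [ring|].
    rewrite hA'. ring. }
  destruct (classic (s = 0)) as [h0|h0]; [now left|right].
  apply (Cmult_eq0_l _ _ h0) in hfac.
  replace s with (s - RtoC (- (A0 * B0 + A1 * B1 + 2)) + RtoC (- (A0 * B0 + A1 * B1 + 2)))%C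
    by ring.
  rewrite hfac. ring.
Qed.

Lemma lin_matrix_eigenvalue_Re (A0 B0 A1 B1 : R) (lam : C) :
  A0 * A1 = 1 -> 0 <= A0 * B0 + A1 * B1 + 2 ->
  is_eigenvalue4 (lin_matrix A0 B0 A1 B1) lam -> Re lam = 0.
Proof.
intros hA hT hlam.
destruct (lin_matrix_eigenvalue_sq _ _ _ _ _ hA hlam) as [hs|hs];
  (apply Re_eq0_of_sq_nonpos with (2 := hs); lra).
Qed.

Lemma spectrally_stable_of_coefs (k w U0 U1 : R) :
  (1 + w - k * U0 ^ 2) * (1 + w - k * U1 ^ 2) = 1 ->
  0 <= (1 + w - k * U0 ^ 2) * (1 + w - k * U0 ^ 2 - 2 * k * U0 ^ 2)
       + (1 + w - k * U1 ^ 2) * (1 + w - k * U1 ^ 2 - 2 * k * U1 ^ 2) + 2 ->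
  spectrally_stable k w U0 U1.
Proof.
intros hdet htr lam hlam.
rewrite (lin_matrix_eigenvalue_Re _ _ _ _ lam hdet htr); [lra|].
exact (is_eigenvalue4_ext _ _ lam (Lmat_lin_matrix k w U0 U1) hlam).
Qed.

Definition mass (w : C2) : R :=
  Re (fst w) ^ 2 + Im (fst w) ^ 2 + Re (snd w) ^ 2 + Im (snd w) ^ 2.
Definition stokes_X (w : C2) : R :=
  Re (fst w) ^ 2 + Im (fst w) ^ 2 - Re (snd w) ^ 2 - Im (snd w) ^ 2.
Definition stokes_Y (w : C2) : R :=
  2 * (Re (fst w) * Re (snd w) + Im (fst w) * Im (snd w)).

(* [stokes_Y + kappa/2 (|u0|^4 + |u1|^4)] is the Hamiltonian of (H); subtracting
   [kappa mass^2 / 4] leaves a function of the Stokes coordinates alone. *)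
Definition reduced_energy (k : R) (w : C2) : R := stokes_Y w + k * stokes_X w ^ 2 / 4.

Lemma stokes_sq_le_mass_sq (w : C2) : stokes_X w ^ 2 + stokes_Y w ^ 2 <= mass w ^ 2.
Proof.
unfold stokes_X, stokes_Y, mass.
set (a := Re (fst w)); set (b := Im (fst w)); set (c := Re (snd w)); set (d := Im (snd w)).
assert (0 <= (2 * (b * c - a * d)) ^ 2) by apply pow2_ge_0. nra.
Qed.

Lemma is_derive_Re (f : R -> C) (t : R) (l : C) :
  is_derive (K := R_AbsRing) (V := C_R_NormedModule) f t l -> is_derive (fun s => Re (f s)) t (Re l).
Proof.
intros H. eapply filterdiff_ext_lin.
- apply (filterdiff_comp f fst); [exact H|apply filterdiff_linear, is_linear_fst].
- reflexivity.
Qed.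

Lemma is_derive_Im (f : R -> C) (t : R) (l : C) :
  is_derive (K := R_AbsRing) (V := C_R_NormedModule) f t l -> is_derive (fun s => Im (f s)) t (Im l).
Proof.
intros H. eapply filterdiff_ext_lin.
- apply (filterdiff_comp f snd); [exact H|apply filterdiff_linear, is_linear_snd].
- reflexivity.
Qed.

Lemma Ci_mul_eq_parts (z z' dz : C) (k : R) :
  (Ci * dz = z - z' - RtoC k * RtoC (Cmod z ^ 2) * z)%C ->
  Re dz = Im z - Im z' - k * (Re z ^ 2 + Im z ^ 2) * Im z /\
  Im dz = - (Re z - Re z' - k * (Re z ^ 2 + Im z ^ 2) * Re z).
Proof.
rewrite Cmod2_alt. destruct z as [x y], z' as [x' y'], dz as [p q]. simpl.
intros H. pose proof (f_equal fst H) as e1; pose proof (f_equal snd H) as e2.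
simpl in e1, e2. split; nra.
Qed.

Lemma constant_of_derive_0 (f : R -> R) : (forall t, is_derive f t 0) -> forall t, f t = f 0.
Proof.
intros H t.
assert (hc : forall s, continuity_pt f s).
{ intro s. apply continuity_pt_filterlim.
  apply (ex_derive_continuous (V := R_NormedModule)). exists 0. apply H. }
destruct (MVT_gen f 0 t (fun _ => 0)) as [c [_ hmvt]]; [intros; apply H|intros; apply hc|lra].
Qed.

Section Flow.
Variables (k : R) (u : R -> C2).
Hypothesis Hu : solves_H k u.

Let a s := Re (fst (u s)).
Let b s := Im (fst (u s)).
Let c s := Re (snd (u s)).
Let d s := Im (snd (u s)).

Lemma flow_real_system : forall t,
  is_derive a t (b t - d t - k * (a t ^ 2 + b t ^ 2) * b t) /\
  is_derive b t (- (a t - c t - k * (a t ^ 2 + b t ^ 2) * a t)) /\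
  is_derive c t (d t - b t - k * (c t ^ 2 + d t ^ 2) * d t) /\
  is_derive d t (- (c t - a t - k * (c t ^ 2 + d t ^ 2) * c t)).
Proof.
destruct Hu as [du0 [du1 [H0 [H1 [E0 E1]]]]]. intro t.
destruct (Ci_mul_eq_parts _ _ _ _ (E0 t)) as [ea eb].
destruct (Ci_mul_eq_parts _ _ _ _ (E1 t)) as [ec ed].
unfold a, b, c, d. rewrite <- ea, <- eb, <- ec, <- ed.
split; [|split; [|split]].
- exact (is_derive_Re _ _ _ (H0 t)).
- exact (is_derive_Im _ _ _ (H0 t)).
- exact (is_derive_Re _ _ _ (H1 t)).
- exact (is_derive_Im _ _ _ (H1 t)).
Qed.

Ltac flow_derive t :=
  destruct (flow_real_system t) as [Ha [Hb [Hc Hd]]];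
  auto_derive; [repeat split; eexists; eassumption|];
  rewrite (is_derive_unique (fun x : R => a x) _ _ Ha), (is_derive_unique (fun x : R => b x) _ _ Hb),
          (is_derive_unique (fun x : R => c x) _ _ Hc), (is_derive_unique (fun x : R => d x) _ _ Hd).

Lemma mass_conserved : forall t, mass (u t) = mass (u 0).
Proof.
apply (constant_of_derive_0 (fun s => a s ^ 2 + b s ^ 2 + c s ^ 2 + d s ^ 2)).
intro t. flow_derive t. ring.
Qed.

Lemma reduced_energy_conserved : forall t, reduced_energy k (u t) = reduced_energy k (u 0).
Proof.
apply (constant_of_derive_0
  (fun s => 2 * (a s * c s + b s * d s) + k * (a s ^ 2 + b s ^ 2 - c s ^ 2 - d s ^ 2) ^ 2 / 4)).
intro t. flow_derive t. field.
Qed.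

Lemma stokes_X_continuous : continuity (fun s => stokes_X (u s)).
Proof.
intro t. apply continuity_pt_filterlim.
apply (ex_derive_continuous (V := R_NormedModule) (fun s => a s ^ 2 + b s ^ 2 - c s ^ 2 - d s ^ 2)).
destruct (flow_real_system t) as [Ha [Hb [Hc Hd]]].
auto_derive. repeat split; eexists; eassumption.
Qed.

End Flow.

Lemma Rabs_le_of_sq (x r : R) : 0 <= r -> x ^ 2 <= r ^ 2 -> Rabs x <= r.
Proof.
intros hr h. rewrite <- (Rabs_pos_eq r hr). apply Rsqr_le_abs_0. unfold Rsqr. lra.
Qed.

Definition stokes_near (r Xs Ys : R) (w : C2) : Prop :=
  Rabs (mass w - 1) <= r /\ Rabs (stokes_X w - Xs) <= r /\ Rabs (stokes_Y w - Ys) <= r.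

Lemma exists_phase (p q : R) : exists th, p * cos th + q * sin th = sqrt (p ^ 2 + q ^ 2).
Proof.
destruct (Req_dec (p ^ 2 + q ^ 2) 0) as [h|h].
{ exists 0. rewrite h, sqrt_0, cos_0, sin_0. nra. }
set (m := sqrt (p ^ 2 + q ^ 2)).
assert (hm : 0 < m) by (apply sqrt_lt_R0; nra).
assert (hm2 : m * m = p ^ 2 + q ^ 2) by (apply sqrt_sqrt; nra).
assert (hc : -1 <= p / m <= 1).
{ apply Rabs_le_between, Rabs_le_of_sq; [lra|].
  replace ((p / m) ^ 2) with (p ^ 2 / (m * m)) by (field; lra).
  apply (Rmult_le_reg_r (m * m)); [nra|]. field_simplify; nra. }
assert (hs : sqrt (1 - (p / m)²) = Rabs q / m).
{ replace (1 - (p / m)²) with ((q / m)²) by (unfold Rsqr; field_simplify_eq; nra).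
  rewrite sqrt_Rsqr_abs, Rabs_div, (Rabs_pos_eq m) by lra. reflexivity. }
destruct (Rle_or_lt 0 q) as [hq|hq].
- exists (acos (p / m)). rewrite cos_acos, sin_acos, hs, Rabs_pos_eq by lra.
  apply (Rmult_eq_reg_r m); [|lra]. field_simplify; nra.
- exists (- acos (p / m)). rewrite cos_neg, sin_neg, cos_acos, sin_acos, hs, Rabs_left by lra.
  apply (Rmult_eq_reg_r m); [|lra]. field_simplify; nra.
Qed.

Lemma orbit_dist_le (U0 U1 e : R) (w : C2) :
  (exists th, normC2 (subC2 w (rotC2 th U0 U1)) <= e) -> Rbar_le (orbit_dist U0 U1 w) e.
Proof.
intros [th hth]. unfold orbit_dist.
destruct (Glb_Rbar_correct (fun x => exists th, x = normC2 (subC2 w (rotC2 th U0 U1)))) as [hlb _].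
eapply Rbar_le_trans; [apply hlb; exists th; reflexivity|exact hth].
Qed.

Lemma orbit_dist_le_of_stokes_near (U0 U1 r e : R) (w : C2) :
  U0 ^ 2 + U1 ^ 2 = 1 -> 0 <= e -> 4 * r <= e ^ 2 ->
  stokes_near r (U0 ^ 2 - U1 ^ 2) (2 * U0 * U1) w -> Rbar_le (orbit_dist U0 U1 w) e.
Proof.
intros hU he her [hN [hX hY]].
set (Xs := U0 ^ 2 - U1 ^ 2) in *. set (Ys := 2 * U0 * U1) in *.
destruct w as [[a b] [c d]]. unfold mass, stokes_X, stokes_Y, Re, Im in *. cbn [fst snd] in *.
(* [p + i q] is the overlap of [w] with [U]; its squared modulus is
   [(mass + X Xs + Y Ys) / 2] and it is at least [1 - 3 r / 2]. *)
set (p := a * U0 + c * U1). set (q := b * U0 + d * U1).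
destruct (exists_phase p q) as [th hth].
set (m := sqrt (p ^ 2 + q ^ 2)) in hth.
assert (hm0 : 0 <= m) by apply sqrt_pos.
assert (hm2 : m * m = p ^ 2 + q ^ 2) by (apply sqrt_sqrt; nra).
assert (hXY : Xs ^ 2 + Ys ^ 2 = 1).
{ transitivity ((U0 ^ 2 + U1 ^ 2) ^ 2); [unfold Xs, Ys; ring|rewrite hU; ring]. }
assert (hXs : -1 <= Xs <= 1) by (apply Rabs_le_between, Rabs_le_of_sq; nra).
assert (hYs : -1 <= Ys <= 1) by (apply Rabs_le_between, Rabs_le_of_sq; nra).
apply Rabs_le_between in hN, hX, hY.
assert (hpq : 2 * (p ^ 2 + q ^ 2) >= 2 - 3 * r).
{ replace (2 * (p ^ 2 + q ^ 2)) with
    ((a ^ 2 + b ^ 2 + c ^ 2 + d ^ 2) * (U0 ^ 2 + U1 ^ 2)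
     + (a ^ 2 + b ^ 2 - c ^ 2 - d ^ 2) * Xs + 2 * (a * c + b * d) * Ys)
    by (unfold p, q, Xs, Ys; ring).
  rewrite hU. nra. }
assert (hm : m >= 1 - 3 * r / 2) by nra.
apply orbit_dist_le. exists th.
assert (hsc : cos th ^ 2 + sin th ^ 2 = 1) by (rewrite <- (sin2_cos2 th); unfold Rsqr; ring).
unfold normC2, subC2, rotC2, expi. rewrite !Cmod2_alt. cbn [fst snd Re Im Cminus Cplus Copp Cmult RtoC].
rewrite <- (sqrt_pow2 e he). apply sqrt_le_1_alt.
match goal with |- ?L <= _ =>
  replace L with (a ^ 2 + b ^ 2 + c ^ 2 + d ^ 2 + (cos th ^ 2 + sin th ^ 2) * (U0 ^ 2 + U1 ^ 2)
                  - 2 * (p * cos th + q * sin th)) by (unfold p, q; ring) end.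
rewrite hsc, hU, hth. lra.
Qed.

Lemma cauchy_schwarz2 (u v x y : R) : (u * x + v * y) ^ 2 <= (u ^ 2 + v ^ 2) * (x ^ 2 + y ^ 2).
Proof. assert (0 <= (u * y - v * x) ^ 2) by apply pow2_ge_0. nra. Qed.

Lemma stokes_near_of_normC2 (U0 U1 del : R) (w : C2) :
  U0 ^ 2 + U1 ^ 2 = 1 -> 0 <= del <= 1 ->
  normC2 (subC2 w (RtoC U0, RtoC U1)) <= del ->
  stokes_near (3 * del) (U0 ^ 2 - U1 ^ 2) (2 * U0 * U1) w.
Proof.
intros hU hdel hw.
destruct w as [[a b] [c d]].
unfold stokes_near, mass, stokes_X, stokes_Y, normC2, subC2 in *. rewrite !Cmod2_alt in hw.
unfold Re, Im in *. cbn [fst snd Cminus Cplus Copp RtoC] in *.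
set (e1 := a - U0) in *. set (e3 := c - U1) in *.
replace (b + - 0) with b in hw by ring. replace (d + - 0) with d in hw by ring.
assert (hs : e1 ^ 2 + b ^ 2 + (e3 ^ 2 + d ^ 2) <= del ^ 2).
{ assert (hpos : 0 <= e1 ^ 2 + b ^ 2 + (e3 ^ 2 + d ^ 2)) by nra.
  rewrite <- (sqrt_pow2 del) in hw by lra. apply sqrt_le_0 in hw; [exact hw|exact hpos|nra]. }
assert (hdel2 : del ^ 2 <= del) by nra.
assert (hlin : forall u v, u ^ 2 + v ^ 2 = 1 -> Rabs (u * e1 + v * e3) <= del).
{ intros u v huv. apply Rabs_le_of_sq; [lra|].
  eapply Rle_trans; [apply cauchy_schwarz2|]. rewrite huv. nra. }
assert (hquad : Rabs (2 * (e1 * e3 + b * d)) <= del).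
{ assert (0 <= (e1 - e3) ^ 2) by apply pow2_ge_0. assert (0 <= (e1 + e3) ^ 2) by apply pow2_ge_0.
  assert (0 <= (b - d) ^ 2) by apply pow2_ge_0. assert (0 <= (b + d) ^ 2) by apply pow2_ge_0.
  apply Rabs_le. split; nra. }
replace a with (U0 + e1) by (unfold e1; ring). replace c with (U1 + e3) by (unfold e3; ring).
pose proof (hlin U0 U1 hU) as l1.
pose proof (hlin U0 (- U1) ltac:(rewrite <- hU; ring)) as l2.
pose proof (hlin U1 U0 ltac:(rewrite <- hU; ring)) as l3.
apply Rabs_le_between in l1, l2, l3, hquad.
split; [|split]; apply Rabs_le_between; split; nra.
Qed.

(* [(x, y)] are the Stokes coordinates of a state of mass [N], [(x0, y0)] those of the
   initial state, and the equation is conservation of [reduced_energy].  The sign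
   condition only matters for [Xs <> 0]: the mirror state [(-Xs, Ys)] has the same
   energy. *)
Definition reduced_stable (k Xs Ys : R) : Prop :=
  forall r, 0 < r -> exists rho, 0 < rho /\
    forall N x0 y0 x y,
      Rabs (N - 1) <= rho -> Rabs (x0 - Xs) <= rho -> Rabs (y0 - Ys) <= rho ->
      x ^ 2 + y ^ 2 <= N ^ 2 -> y + k * x ^ 2 / 4 = y0 + k * x0 ^ 2 / 4 ->
      0 <= x * Xs -> Rabs (x - Xs) <= r /\ Rabs (y - Ys) <= r.

Lemma exists_pos_le4 (a b c d : R) : 0 < a -> 0 < b -> 0 < c -> 0 < d ->
  exists rho, 0 < rho /\ rho <= a /\ rho <= b /\ rho <= c /\ rho <= d.
Proof.
intros ha hb hc hd. exists (Rmin (Rmin a b) (Rmin c d)).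
pose proof (Rmin_l (Rmin a b) (Rmin c d)); pose proof (Rmin_r (Rmin a b) (Rmin c d)).
pose proof (Rmin_l a b); pose proof (Rmin_r a b); pose proof (Rmin_l c d); pose proof (Rmin_r c d).
repeat split; try lra. repeat apply Rmin_glb_lt; assumption.
Qed.

Lemma Rmult_le_of_le_div (x a c : R) : 0 < c -> x <= a / c -> x * c <= a.
Proof.
intros hc h. apply (Rmult_le_compat_r c) in h; [|lra].
replace (a / c * c) with a in h by (field; lra). exact h.
Qed.

Lemma Rabs_le_of_disk (x y N : R) : 0 <= N -> x ^ 2 + y ^ 2 <= N ^ 2 -> Rabs y <= N.
Proof. intros hN h. apply Rabs_le_of_sq; [exact hN|]. assert (0 <= x ^ 2) by apply pow2_ge_0. lra. Qed.

Lemma reduced_energy_le_of_disk (k x y N : R) : 0 <= k -> x ^ 2 + y ^ 2 <= N ^ 2 ->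
  y + k * x ^ 2 / 4 <= y + k * (N ^ 2 - y ^ 2) / 4.
Proof. intros hk h. assert (k * x ^ 2 <= k * (N ^ 2 - y ^ 2)) by (apply Rmult_le_compat_l; lra). lra. Qed.

Lemma reduced_stable_antisymmetric (k : R) : 0 < k -> reduced_stable k 0 (-1).
Proof.
intros hk r hr.
assert (hc : 0 < r / (1 + k)) by (apply Rdiv_lt_0_compat; lra).
assert (hd : 0 < k * r ^ 2 / (8 + k)).
{ apply Rdiv_lt_0_compat; [apply Rmult_lt_0_compat; [lra|apply pow_lt; lra]|lra]. }
destruct (exists_pos_le4 _ _ _ _ Rlt_0_1 Rlt_0_1 hc hd) as [rho [hrho [h1 [_ [h2 h3]]]]].
apply Rmult_le_of_le_div in h2; [|lra]. apply Rmult_le_of_le_div in h3; [|lra].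
exists rho. split; [exact hrho|].
intros N x0 y0 x y hN hx0 hy0 hdisk hE _.
rewrite Rminus_0_r in hx0 |- *. replace (y - -1) with (y + 1) in * by ring.
replace (y0 - -1) with (y0 + 1) in hy0 by ring.
apply Rabs_le_between in hN, hx0, hy0.
pose proof (Rabs_le_of_disk x y N ltac:(lra) hdisk) as hy. apply Rabs_le_between in hy.
assert (hx0' : k * x0 ^ 2 <= k * rho) by (apply Rmult_le_compat_l; nra).
assert (hkx : k * x ^ 2 <= k * r ^ 2) by lra.
assert (hx : x ^ 2 <= r ^ 2) by (apply (Rmult_le_reg_l k); lra).
split.
- apply Rabs_le_of_sq; lra.
- apply Rabs_le_between. split; nra.
Qed.

Lemma reduced_stable_symmetric (k : R) : 0 < k < 2 -> reduced_stable k 0 1.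
Proof.
intros hk r hr.
set (D := 2 - k). assert (hD : 0 < D) by (unfold D; lra).
assert (hb : 0 < D / 4) by lra.
assert (hc : 0 < r * D / 10) by (apply Rdiv_lt_0_compat; nra).
assert (hd : 0 < r ^ 2 * D / 32).
{ apply Rdiv_lt_0_compat; [apply Rmult_lt_0_compat; [apply pow_lt|]; lra|lra]. }
destruct (exists_pos_le4 _ _ _ _ Rlt_0_1 hb hc hd) as [rho [hrho [h1 [h2 [h3 h4]]]]].
exists rho. split; [exact hrho|].
intros N x0 y0 x y hN hx0 hy0 hdisk hE _.
rewrite Rminus_0_r in hx0 |- *.
apply Rabs_le_between in hN, hx0, hy0.
pose proof (Rabs_le_of_disk x y N ltac:(lra) hdisk) as hy. apply Rabs_le_between in hy.
set (E := y0 + k * x0 ^ 2 / 4) in hE.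
assert (hE0 : 1 - rho <= E) by (assert (0 <= k * x0 ^ 2) by (apply Rmult_le_pos; nra); unfold E; lra).
(* near the pole the bound [E <= y + k (N^2 - y^2) / 4] falls off like [(N - y) (1 - k N / 2)] *)
pose proof (reduced_energy_le_of_disk k x y N ltac:(lra) hdisk) as hEup. rewrite hE in hEup.
assert (hcoef : D / 4 <= 1 - k * (N + y) / 4).
{ assert (k * (N + y) <= k * (2 + 2 * rho)) by (apply Rmult_le_compat_l; lra).
  assert (k * rho <= 2 * rho) by (apply Rmult_le_compat_r; lra).
  unfold D in *. lra. }
assert (hNy : (N - y) * (D / 4) <= 2 * rho).
{ assert ((N - y) * (D / 4) <= (N - y) * (1 - k * (N + y) / 4)) by (apply Rmult_le_compat_l; lra).
  nra. }
assert (hNy' : (N - y) * D <= 8 * rho) by lra.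
split.
- apply Rabs_le_of_sq; [lra|].
  assert (hx2 : x ^ 2 <= (N - y) * (N + y)) by nra.
  assert (x ^ 2 * D <= r ^ 2 * D) by nra.
  apply (Rmult_le_reg_r D); lra.
- apply Rmult_le_of_le_div in h3; [|lra].
  assert (hrD : r * D <= r * 2) by (apply Rmult_le_compat_l; unfold D; lra).
  assert (hDr : rho * D <= rho * 2) by (apply Rmult_le_compat_l; unfold D; lra).
  assert ((1 - y) * D <= r * D) by nra.
  assert (1 - y <= r) by (apply (Rmult_le_reg_r D); lra).
  apply Rabs_le_between. split; lra.
Qed.

Lemma Rabs_sub_le_of_same_sign (x X r : R) :
  0 <= x * X -> 0 < Rabs X -> Rabs (x ^ 2 - X ^ 2) <= r * Rabs X -> Rabs (x - X) <= r.
Proof.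
intros hs hX h. apply (Rmult_le_reg_r (Rabs X) _ _ hX). eapply Rle_trans; [|exact h].
replace (x ^ 2 - X ^ 2) with ((x - X) * (x + X)) by ring. rewrite Rabs_mult.
apply Rmult_le_compat_l; [apply Rabs_pos|].
apply Rsqr_le_abs_0. unfold Rsqr. nra.
Qed.

(* Completing the square in [y]: below the maximum [2/k + k Xs^2/4 = 1/k + k/4],
   the energy controls [y - 2/k]. *)
Lemma reduced_energy_gap (k Xs N x y : R) : 0 < k -> Xs ^ 2 = 1 - 4 / k ^ 2 ->
  x ^ 2 + y ^ 2 <= N ^ 2 ->
  k * (y - 2 / k) ^ 2 / 4 <= (2 / k + k * Xs ^ 2 / 4) - (y + k * x ^ 2 / 4) + k * (N ^ 2 - 1) / 4.
Proof.
intros hk hXs hdisk. pose proof (reduced_energy_le_of_disk k x y N ltac:(lra) hdisk) as h.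
rewrite hXs.
replace (y + k * (N ^ 2 - y ^ 2) / 4)
  with (1 / k + k / 4 + k * (N ^ 2 - 1) / 4 - k * (y - 2 / k) ^ 2 / 4) in h by (field; lra).
replace (2 / k + k * (1 - 4 / k ^ 2) / 4) with (1 / k + k / 4) by (field; lra). lra.
Qed.

Lemma Rabs_sq_sub_sq_le (x X rho : R) :
  Rabs (x - X) <= rho -> rho <= 1 -> Rabs X <= 1 -> Rabs (x ^ 2 - X ^ 2) <= 3 * rho.
Proof.
intros hx hrho hX.
replace (x ^ 2 - X ^ 2) with ((x - X) * (x - X + 2 * X)) by ring.
rewrite Rabs_mult, (Rmult_comm 3).
apply Rmult_le_compat; try apply Rabs_pos; [exact hx|].
eapply Rle_trans; [apply Rabs_triang|]. rewrite Rabs_mult, (Rabs_pos_eq 2) by lra. lra.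
Qed.

Lemma reduced_stable_asymmetric (k Xs : R) :
  2 < k -> Xs ^ 2 = 1 - 4 / k ^ 2 -> reduced_stable k Xs (2 / k).
Proof.
intros hk hXs r hr.
assert (hk2 : 0 < 4 / k ^ 2 < 1).
{ split; [apply Rdiv_lt_0_compat; nra|]. apply (Rmult_lt_reg_r (k ^ 2)); [nra|].
  field_simplify; nra. }
set (A := Rabs Xs).
assert (hA : 0 < A) by (apply Rabs_pos_lt; intro h; rewrite h in hXs; lra).
assert (hA1 : A <= 1) by (apply Rabs_le_of_sq; lra).
set (s := r * A / 4). assert (hs : 0 < s) by (unfold s; nra).
assert (hc : 0 < s / (1 + k)) by (apply Rdiv_lt_0_compat; lra).
assert (hd : 0 < s ^ 2 / 9) by (apply Rdiv_lt_0_compat; [apply pow_lt|]; lra).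
destruct (exists_pos_le4 _ _ _ _ Rlt_0_1 Rlt_0_1 hc hd) as [rho [hrho [h1 [_ [h2 h3]]]]].
apply Rmult_le_of_le_div in h2; [|lra]. apply Rmult_le_of_le_div in h3; [|lra].
exists rho. split; [exact hrho|].
intros N x0 y0 x y hN hx0 hy0 hdisk hE hsign.
set (dE := (2 / k + k * Xs ^ 2 / 4) - (y0 + k * x0 ^ 2 / 4)).
assert (hdE : Rabs dE <= rho * (1 + k)).
{ replace dE with (- (y0 - 2 / k) - k / 4 * (x0 ^ 2 - Xs ^ 2)) by (unfold dE; field; lra).
  pose proof (Rabs_sq_sub_sq_le x0 Xs rho hx0 h1 hA1) as hx0sq.
  apply Rabs_le_between in hy0, hx0sq. apply Rabs_le_between. nra. }
pose proof (reduced_energy_gap k Xs N x y ltac:(lra) hXs hdisk) as hgap.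
rewrite hE in hgap. fold dE in hgap.
apply Rabs_le_between in hN, hdE.
assert (hy : Rabs (y - 2 / k) <= s).
{ apply Rabs_le_of_sq; [lra|].
  assert (hN2 : k * (N ^ 2 - 1) <= k * (3 * rho)) by (apply Rmult_le_compat_l; nra).
  assert (k * rho * (1 + k) <= k * rho * (3 * k / 2)) by (apply Rmult_le_compat_l; nra).
  assert (k * (y - 2 / k) ^ 2 <= k * (9 * rho)) by nra.
  assert ((y - 2 / k) ^ 2 <= 9 * rho) by (apply (Rmult_le_reg_l k); lra). lra. }
split.
- apply Rabs_sub_le_of_same_sign; [exact hsign|exact hA|].
  replace (x ^ 2 - Xs ^ 2) with (4 / k * - (dE + (y - 2 / k))) by (unfold dE; rewrite <- hE; field; lra).
  rewrite Rabs_mult, Rabs_Ropp, (Rabs_pos_eq (4 / k)) by (apply Rlt_le, Rdiv_lt_0_compat; lra).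
  assert (4 / k <= 2).
  { apply (Rmult_le_reg_r k); [lra|]. replace (4 / k * k) with 4 by (field; lra). lra. }
  apply Rabs_le_between in hy.
  apply Rle_trans with (2 * (2 * s)); [|unfold s; fold A; lra].
  apply Rmult_le_compat; [apply Rlt_le, Rdiv_lt_0_compat; lra|apply Rabs_pos|lra|].
  apply Rabs_le_between. lra.
- assert (s <= r) by (unfold s; nra). lra.
Qed.

Lemma continuous_sign_trapped (f : R -> R) (Xs r : R) :
  continuity f -> r < Rabs Xs -> Rabs (f 0 - Xs) <= r ->
  (forall s, 0 <= f s * Xs -> Rabs (f s - Xs) <= r) ->
  forall t, 0 <= t -> 0 <= f t * Xs.
Proof.
intros hf hr h0 htrap t ht.
assert (hpos : forall s, Rabs (f s - Xs) <= r -> 0 < f s * Xs).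
{ intros s hs. replace (f s * Xs) with (Xs * Xs + (f s - Xs) * Xs) by ring.
  assert (hXs : 0 < Rabs Xs) by (pose proof (Rabs_pos (f s - Xs)); lra).
  assert (hlt : Rabs ((f s - Xs) * Xs) < Xs * Xs).
  { rewrite Rabs_mult. replace (Xs * Xs) with (Rabs Xs * Rabs Xs)
      by (rewrite <- Rabs_mult; apply Rabs_pos_eq; nra).
    apply Rmult_lt_compat_r; lra. }
  apply Rabs_def2 in hlt. lra. }
destruct (Rle_or_lt 0 (f t * Xs)) as [h|h]; [exact h|exfalso].
assert (hg : continuity (fun s => - (f s * Xs))).
{ intro s. apply continuity_pt_opp, continuity_pt_mult; [apply hf|apply continuity_pt_const; intros ? ?; reflexivity]. }
destruct (IVT (fun s => - (f s * Xs)) 0 t hg) as [z [_ hz]].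
- assert (t <> 0) by (intro e; subst t; pose proof (hpos 0 h0); lra). lra.
- pose proof (hpos 0 h0). lra.
- lra.
- assert (hz0 : f z * Xs = 0) by lra.
  pose proof (hpos z (htrap z ltac:(lra))). lra.
Qed.

(* For [Xs <> 0] the radius stays below [|Xs|], so that [X] cannot cross [0]. *)
Lemma exists_trap_radius (eps Xs : R) : 0 < eps ->
  exists r, 0 < r /\ 4 * r <= eps ^ 2 /\ (Xs = 0 \/ r < Rabs Xs).
Proof.
intros heps. assert (he : 0 < eps ^ 2 / 4) by (apply Rdiv_lt_0_compat; [apply pow_lt|]; lra).
destruct (Req_dec Xs 0) as [h|h].
- exists (eps ^ 2 / 4). split; [exact he|split; [lra|now left]].
- assert (hX : 0 < Rabs Xs / 2) by (pose proof (Rabs_pos_lt Xs h); lra).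
  destruct (exists_pos_le4 _ _ _ _ he he hX hX) as [r [hr [h1 [_ [h2 _]]]]].
  exists r. split; [exact hr|split; [lra|right; lra]].
Qed.

Lemma orbitally_stable_of_reduced_stable (k U0 U1 Xs Ys : R) :
  U0 ^ 2 + U1 ^ 2 = 1 -> U0 ^ 2 - U1 ^ 2 = Xs -> 2 * U0 * U1 = Ys ->
  reduced_stable k Xs Ys -> orbitally_stable k U0 U1.
Proof.
intros hU hX hY hred eps heps.
destruct (exists_trap_radius eps Xs heps) as [r [hr [hre hrX]]].
destruct (hred r hr) as [rho [hrho hstab]].
assert (hr3 : 0 < r / 3) by lra. assert (hrho3 : 0 < rho / 3) by lra.
destruct (exists_pos_le4 _ _ _ _ Rlt_0_1 Rlt_0_1 hr3 hrho3) as [del [hdel [h1 [_ [h2 h3]]]]].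
exists del. split; [exact hdel|].
intros u hu h0 t ht.
destruct (stokes_near_of_normC2 U0 U1 del (u 0) hU ltac:(lra) h0) as [hN0 [hX0 hY0]].
rewrite hX in hX0. rewrite hY in hY0.
assert (hclose : forall s, 0 <= stokes_X (u s) * Xs ->
          Rabs (stokes_X (u s) - Xs) <= r /\ Rabs (stokes_Y (u s) - Ys) <= r).
{ intros s hs. apply (hstab (mass (u 0)) (stokes_X (u 0)) (stokes_Y (u 0))); try lra.
  - rewrite <- (mass_conserved k u hu s). apply stokes_sq_le_mass_sq.
  - exact (reduced_energy_conserved k u hu s). }
assert (hsign : 0 <= stokes_X (u t) * Xs).
{ destruct hrX as [hX0'|hrX]; [rewrite hX0'; lra|].
  apply (continuous_sign_trapped (fun s => stokes_X (u s)) Xs r); try assumption.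
  - exact (stokes_X_continuous k u hu).
  - lra.
  - intros s hs. exact (proj1 (hclose s hs)). }
apply (orbit_dist_le_of_stokes_near U0 U1 r); [exact hU|lra|exact hre|].
rewrite hX, hY. destruct (hclose t hsign) as [hXt hYt].
split; [rewrite (mass_conserved k u hu t); lra|tauto].
Qed.

Lemma inv_sqrt2_sq : (1 / sqrt 2) ^ 2 = 1 / 2.
Proof.
assert (h : 0 < sqrt 2) by (apply sqrt_lt_R0; lra).
replace ((1 / sqrt 2) ^ 2) with (1 / (sqrt 2 * sqrt 2)) by (field; lra).
rewrite sqrt_sqrt by lra. reflexivity.
Qed.

Lemma alpha_beta_tau (k tau : R) : 2 < k -> (tau = 1 \/ tau = -1) ->
  alpha_tau k tau ^ 2 + beta_tau k tau ^ 2 = 1 /\ alpha_tau k tau * beta_tau k tau = 1 / k.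
Proof.
intros hk htau. unfold alpha_tau, beta_tau.
assert (hp : sqrt (k + 2) * sqrt (k + 2) = k + 2) by (apply sqrt_sqrt; lra).
assert (hm : sqrt (k - 2) * sqrt (k - 2) = k - 2) by (apply sqrt_sqrt; lra).
assert (hs : sqrt k * sqrt k = k) by (apply sqrt_sqrt; lra).
assert (hs0 : 0 < sqrt k) by (apply sqrt_lt_R0; lra).
assert (ht : tau * tau = 1) by (destruct htau; subst; ring).
split.
- transitivity ((2 * (sqrt (k + 2) * sqrt (k + 2)) + 2 * (tau * tau) * (sqrt (k - 2) * sqrt (k - 2)))
                / (4 * (sqrt k * sqrt k))); [field; lra|].
  rewrite hp, hm, hs, ht. field. lra.
- transitivity ((sqrt (k + 2) * sqrt (k + 2) - (tau * tau) * (sqrt (k - 2) * sqrt (k - 2)))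
                / (4 * (sqrt k * sqrt k))); [field; lra|].
  rewrite hp, hm, hs, ht. field. lra.
Qed.

Lemma inv_sqrt2_mul_2 : 2 * (1 / sqrt 2) * (1 / sqrt 2) = 1.
Proof. transitivity (2 * (1 / sqrt 2) ^ 2); [ring|rewrite inv_sqrt2_sq; field]. Qed.

Lemma antisymmetric_state_stable (k : R) : 0 < k ->
  spectrally_stable k (k / 2 - 2) (1 / sqrt 2) (- (1 / sqrt 2)) /\
  orbitally_stable k (1 / sqrt 2) (- (1 / sqrt 2)).
Proof.
intros hk.
assert (hsq : (- (1 / sqrt 2)) ^ 2 = 1 / 2) by (rewrite <- inv_sqrt2_sq; ring).
split.
- apply spectrally_stable_of_coefs; rewrite inv_sqrt2_sq, hsq; [field|nra].
- apply (orbitally_stable_of_reduced_stable _ _ _ 0 (-1)).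
  + rewrite inv_sqrt2_sq, hsq. field.
  + rewrite inv_sqrt2_sq, hsq. ring.
  + transitivity (- (2 * (1 / sqrt 2) * (1 / sqrt 2))); [ring|rewrite inv_sqrt2_mul_2; reflexivity].
  + exact (reduced_stable_antisymmetric k hk).
Qed.

Lemma symmetric_state_stable (k : R) : 0 < k < 2 ->
  spectrally_stable k (k / 2) (1 / sqrt 2) (1 / sqrt 2) /\
  orbitally_stable k (1 / sqrt 2) (1 / sqrt 2).
Proof.
intros hk. split.
- apply spectrally_stable_of_coefs; rewrite inv_sqrt2_sq; [field|nra].
- apply (orbitally_stable_of_reduced_stable _ _ _ 0 1).
  + rewrite inv_sqrt2_sq. field.
  + ring.
  + exact inv_sqrt2_mul_2.
  + exact (reduced_stable_symmetric k hk).
Qed.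

Lemma asymmetric_state_stable (k tau : R) : 2 < k -> (tau = 1 \/ tau = -1) ->
  spectrally_stable k (k - 1) (alpha_tau k tau) (beta_tau k tau) /\
  orbitally_stable k (alpha_tau k tau) (beta_tau k tau).
Proof.
intros hk htau.
destruct (alpha_beta_tau k tau hk htau) as [hsum hab].
set (a := alpha_tau k tau) in *. set (b := beta_tau k tau) in *.
split.
- apply spectrally_stable_of_coefs.
  + transitivity (k ^ 2 * (a * b) ^ 2 + k ^ 2 * (1 - (a ^ 2 + b ^ 2))); [ring|].
    rewrite hsum, hab. field. lra.
  + match goal with |- 0 <= ?L => replace L with (k ^ 2 - 4) end; [nra|].
    transitivity (k ^ 2 * ((a ^ 2 + b ^ 2) ^ 2 - 6 * (a * b) ^ 2) + 2
                  + 2 * k ^ 2 * (1 - (a ^ 2 + b ^ 2)) ^ 2); [|ring].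
    rewrite hsum, hab. field. lra.
- apply (orbitally_stable_of_reduced_stable _ _ _ (a ^ 2 - b ^ 2) (2 / k)); [exact hsum|reflexivity| |].
  + replace (2 * a * b) with (2 * (a * b)) by ring. rewrite hab. field. lra.
  + apply reduced_stable_asymmetric; [exact hk|].
    transitivity ((a ^ 2 + b ^ 2) ^ 2 - 4 * (a * b) ^ 2); [ring|].
    rewrite hsum, hab. field. lra.
Qed.

Theorem mainTheorem1 (kappa : R) (hk : 0 < kappa) :
  (spectrally_stable kappa (kappa / 2 - 2) (1 / sqrt 2) (- (1 / sqrt 2)) /\
   orbitally_stable kappa (1 / sqrt 2) (- (1 / sqrt 2))) /\
  (kappa < 2 ->
   spectrally_stable kappa (kappa / 2) (1 / sqrt 2) (1 / sqrt 2) /\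
   orbitally_stable kappa (1 / sqrt 2) (1 / sqrt 2)) /\
  (2 < kappa -> forall tau : R, (tau = 1 \/ tau = -1) ->
   spectrally_stable kappa (kappa - 1) (alpha_tau kappa tau) (beta_tau kappa tau) /\
   orbitally_stable kappa (alpha_tau kappa tau) (beta_tau kappa tau)).
Proof.
split; [|split].
- exact (antisymmetric_state_stable kappa hk).
- intros hk2. exact (symmetric_state_stable kappa (conj hk hk2)).
- intros hk2 tau htau. exact (asymmetric_state_stable kappa tau hk2 htau).
Qed.
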